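(* Let $S\in\mathbb{S}^d_m$ and $G\in\mathcal{M}(S)$. Then the sets $\{(x,y):y\in P_G(x)\}$ and $\{(x,y):x\in P_G(y)\}$ are closed in $\mathbb{R}^{2d}$, the set $B:=\{(x,y):x\in P_G(y),\ P_G(x)\not\subset P_G(y)\}$ is an $F_\sigma$-set, and consequently $\{(x,y):x\in P_G(x)\subset P_G(y)\}$ is a Borel subset of $\mathbb{R}^{2d}$.
   Context: $\mathbb{S}^d_m$: symmetric invertible $d\times d$ real matrices with exactly $m$ positive eigenvalues; $S(x,y):=\langle x,Sy\rangle$. $G\subset\mathbb{R}^d$ is $S$-monotone if $S(x-y,x-y)\ge0$ for $x,y\in G$; maximal if not a strict subset of another $S$-monotone set; $\mathcal{M}(S)$ is the family of maximal $S$-monotone sets. $P_G(y):=\operatorname{argmax}_{x\in G}(S(x,y)-\frac12S(x,x))$, $y\in\mathbb{R}^d$. An $F_\sigma$-set is a countable union of closed sets. *)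

From HB Require Import structures.
From mathcomp Require Import all_boot all_order all_algebra.
From mathcomp Require Import all_classical all_reals all_analysis.
Set Implicit Arguments. Unset Strict Implicit. Unset Printing Implicit Defensive.
Import Order.TTheory GRing.Theory Num.Theory.
Import numFieldNormedType.Exports.
Local Open Scope classical_set_scope.
Local Open Scope ring_scope.

Definition Sform (R : realType) (d : nat) (S : 'M[R]_d) (x y : 'rV[R]_d) : R :=
  (x *m S *m y^T) 0 0.

(* S is in S^d_m: symmetric, invertible, and exactly m positive eigenvalues,
   counted with multiplicity (as roots of the characteristic polynomial). *)
Definition in_Sdm (R : realType) (d m : nat) (S : 'M[R]_d) : Prop :=
  S^T = S /\ S \in unitmx /\
  exists lam : 'I_d -> R,
    char_poly S = \prod_(i < d) ('X - (lam i)%:P) /\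
    #|[set i : 'I_d | 0 < lam i]| = m.

Definition S_monotone (R : realType) (d : nat) (S : 'M[R]_d) (G : set 'rV[R]_d) : Prop :=
  forall x y, G x -> G y -> 0 <= Sform S (x - y) (x - y).

Definition maximal_S_monotone (R : realType) (d : nat) (S : 'M[R]_d) (G : set 'rV[R]_d) : Prop :=
  S_monotone S G /\
  forall G', S_monotone S G' -> G `<=` G' -> G' = G.

Definition PG (R : realType) (d : nat) (S : 'M[R]_d) (G : set 'rV[R]_d) (y : 'rV[R]_d)
  : set 'rV[R]_d :=
  [set x | G x /\ forall z, G z ->
     Sform S z y - Sform S z z / 2 <= Sform S x y - Sform S x x / 2].

Definition F_sigma (T : topologicalType) (A : set T) : Prop :=
  exists F : nat -> set T, (forall n, closed (F n)) /\ A = \bigcup_n F n.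

Definition Borel (T : topologicalType) (A : set T) : Prop :=
  smallest (sigma_algebra setT) (@open T) A.

From HB Require Import structures.
From mathcomp Require Import all_boot all_order all_algebra.
From mathcomp Require Import all_classical all_reals all_analysis.

(* A maximal S-monotone set G is closed, since the closure of an S-monotone
   set is S-monotone.  P_G(y) is cut out of G by the inequalities
   S(z,y) - S(z,z)/2 <= S(x,y) - S(x,x)/2 for z in G, all continuous in
   (x, y); hence both graphs of P_G are closed.  When x is in P_G(y), a point
   w of G lies outside P_G(y) exactly when its objective at y is strictly
   below that of x.  Bounding the norms of x, y, w by n and this gap from
   below by 1/(n+1) gives compact sets of triples (x, y, w) whose projections
   to (x, y) exhaust B, so B is F_sigma.  The last set is a closed set minus
   B, hence Borel. *)

Set Implicit Arguments.
Unset Strict Implicit.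
Unset Printing Implicit Defensive.
Import Order.TTheory GRing.Theory Num.Theory.
Import numFieldNormedType.Exports.
Local Open Scope classical_set_scope.
Local Open Scope ring_scope.

Lemma closed_le_fun (T : topologicalType) (R : realFieldType) (f g : T -> R) :
  continuous f -> continuous g -> closed [set t | f t <= g t].
Proof.
move=> cf cg.
rewrite (_ : mkset _ = (fun t => g t - f t) @^-1` [set r | 0 <= r]).
  apply: preimage_closed; last exact: closed_ge.
  by move=> t _; exact: continuousB (cg t) (cf t).
by apply/seteqP; split => t /=; rewrite subr_ge0.
Qed.

Lemma F_sigma_bigcup_image_compact (T U : topologicalType) (f : T -> U)
    (K : nat -> set T) :
  hausdorff_space U -> continuous f -> (forall n, compact (K n)) ->
  F_sigma (\bigcup_n f @` K n).
Proof.
move=> hU cf cK; exists (fun n => f @` K n); split => // n.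
apply: compact_closed hU _; apply: continuous_compact (cK n).
exact: continuous_subspaceT.
Qed.

Lemma Borel_closed (T : topologicalType) (A : set T) : closed A -> Borel A.
Proof.
move=> cA; rewrite -[A]setCK -[~` ~` A]setTD; apply: sigma_algebraCD.
by apply: sub_sigma_algebra; exact: closed_openC cA.
Qed.

Lemma Borel_F_sigma (T : topologicalType) (A : set T) : F_sigma A -> Borel A.
Proof.
by move=> [F [cF ->]]; apply: sigma_algebra_bigcup => n; exact: Borel_closed.
Qed.

Lemma BorelD (T : topologicalType) (A B : set T) :
  Borel A -> Borel B -> Borel (A `\` B).
Proof.
move=> bA bB; rewrite -[A `\` B]setCK setCD -setTD; apply: sigma_algebraCD.
rewrite -bigcup2E; apply: sigma_algebra_bigcup => -[|[|n]] //=.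
- by rewrite -setTD; exact: sigma_algebraCD.
- exact: sigma_algebra0.
Qed.

Lemma continuous_rV_coord (R : numFieldType) (T : topologicalType) d
    (a : T -> 'rV[R]_d) (i : 'I_d) :
  continuous a -> continuous (fun t => a t 0 i).
Proof.
by move=> ca t; exact: continuous_comp (ca t) (@coord_continuous R 1 d 0 i _).
Qed.

Section projection.
Variables (R : realType) (d : nat) (S : 'M[R]_d).
Implicit Types (G : set 'rV[R]_d) (x y w : 'rV[R]_d).

Definition Sobj x y := Sform S x y - Sform S x x / 2.

Lemma Sform_sum x y :
  Sform S x y = \sum_i \sum_j x 0 i * S i j * y 0 j.
Proof.
rewrite /Sform mxE exchange_big; apply: eq_bigr => j _.
by rewrite !mxE big_distrl.
Qed.

Lemma continuous_Sform (T : topologicalType) (a b : T -> 'rV[R]_d) :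
  continuous a -> continuous b -> continuous (fun t => Sform S (a t) (b t)).
Proof.
move=> ca cb; under eq_fun do rewrite Sform_sum.
apply: continuous_big => [|i _]; first exact: add_continuous.
apply: continuous_big => [|j _]; first exact: add_continuous.
move=> t; apply: (@continuousM R T); last exact: continuous_rV_coord.
apply: (@continuousM R T); first exact: continuous_rV_coord.
exact: cst_continuous.
Qed.

Lemma continuous_Sobj (T : topologicalType) (a b : T -> 'rV[R]_d) :
  continuous a -> continuous b -> continuous (fun t => Sobj (a t) (b t)).
Proof.
move=> ca cb t; apply: (@continuousB R R^o T); first exact: continuous_Sform.
by apply: (@continuousM R T); [exact: continuous_Sform | exact: cst_continuous].
Qed.

Lemma S_monotone_closure G : S_monotone S G -> S_monotone S (closure G).
Proof.
move=> mG.
have closed_quad (f : 'rV[R]_d -> 'rV[R]_d) :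
    continuous f -> closed [set u | 0 <= Sform S (f u) (f u)].
  move=> cf; apply: closed_le_fun; first exact: cst_continuous.
  exact: continuous_Sform.
have closure_min A : closed A -> G `<=` A -> closure G `<=` A.
  by move=> /closure_id cA GA; rewrite cA; exact: closureS.
have closure_G_left y : G y ->
    closure G `<=` [set x | 0 <= Sform S (x - y) (x - y)].
  move=> Gy; apply: closure_min => [|x Gx]; last exact: mG.
  apply: closed_quad => u.
  by apply: continuousB; [exact: cvg_id | exact: cst_continuous].
move=> x y clx; apply: (closure_min [set y | 0 <= Sform S (x - y) (x - y)]).
- apply: closed_quad => u.
  by apply: continuousB; [exact: cst_continuous | exact: cvg_id].
- by move=> z Gz; exact: closure_G_left.
Qed.

Lemma maximal_S_monotone_closed G : maximal_S_monotone S G -> closed G.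
Proof.
move=> [mG maxG].
rewrite -(maxG _ (S_monotone_closure mG) (@subset_closure _ G)).
exact: closed_closure.
Qed.

Lemma closed_PG G (T : topologicalType) (a b : T -> 'rV[R]_d) :
  closed G -> continuous a -> continuous b ->
  closed [set t | PG S G (a t) (b t)].
Proof.
move=> cG ca cb.
rewrite (_ : mkset _ =
    b @^-1` G `&` \bigcap_(z in G) [set t | Sobj z (a t) <= Sobj (b t) (a t)]).
  apply: closedI; first exact: preimage_closed.
  apply: closed_bigI => z _; apply: closed_le_fun; last exact: continuous_Sobj.
  by apply: continuous_Sobj => //; exact: cst_continuous.
by apply/seteqP; split => t [Gb Hb]; split.
Qed.

Lemma PG_gapP G y x w : PG S G y x -> G w ->
  ~ PG S G y w <-> Sobj w y < Sobj x y.
Proof.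
move=> [Gx xmax] Gw; split => [wNmax|lt_wx [_ wmax]].
  rewrite ltNge; apply/negP => le_xw; apply: wNmax; split => // z Gz.
  exact: le_trans (xmax z Gz) le_xw.
by have := wmax x Gx; rewrite leNgt lt_wx.
Qed.

Section witness.
Variable G : set 'rV[R]_d.
Hypothesis closedG : closed G.

Definition PG_gap_witness (n : nat) : set (('rV[R]_d * 'rV[R]_d) * 'rV[R]_d) :=
  let K := [set v : 'rV[R]_d | `|v| <= n%:R] in
  (K `*` K `*` K) `&`
  [set t | [/\ PG S G t.1.2 t.1.1, PG S G t.1.1 t.2 &
              Sobj t.2 t.1.2 + n.+1%:R^-1 <= Sobj t.1.1 t.1.2]].

Lemma compact_PG_gap_witness n : compact (PG_gap_witness n).
Proof.
have cK : compact [set v : 'rV[R]_d | `|v| <= n%:R].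
  apply: bounded_closed_compact.
    exists n%:R; split=> // M ltnM v /= le_vn.
    exact: le_trans le_vn (ltW ltnM).
  by apply: closed_le_fun; [exact: norm_continuous | exact: cst_continuous].
apply: compact_closedI; first by do 2![apply: compact_setX => //].
have c11 : continuous (fun t : ('rV[R]_d * 'rV[R]_d) * 'rV[R]_d => t.1.1).
  by move=> t; apply: (@continuous_comp _ _ _ fst fst); exact: cvg_fst.
have c12 : continuous (fun t : ('rV[R]_d * 'rV[R]_d) * 'rV[R]_d => t.1.2).
  move=> t; apply: (@continuous_comp _ _ _ fst snd); first exact: cvg_fst.
  exact: cvg_snd.
have c2 : continuous (fun t : ('rV[R]_d * 'rV[R]_d) * 'rV[R]_d => t.2).
  by move=> t; exact: cvg_snd.
rewrite (_ : mkset _ =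
    [set t | PG S G t.1.2 t.1.1] `&` [set t | PG S G t.1.1 t.2]
    `&` [set t | Sobj t.2 t.1.2 + n.+1%:R^-1 <= Sobj t.1.1 t.1.2]).
  apply: closedI; first by apply: closedI; exact: closed_PG.
  apply: closed_le_fun; last exact: continuous_Sobj.
  move=> t; apply: (@continuousD R R^o _ (fun t => Sobj t.2 t.1.2)).
    exact: continuous_Sobj.
  exact: cst_continuous.
by apply/seteqP; split => t /= [] => [|[]].
Qed.

Lemma PG_not_sub_witnessE :
  [set p : 'rV[R]_d * 'rV[R]_d |
     PG S G p.2 p.1 /\ ~ (PG S G p.1 `<=` PG S G p.2)] =
  \bigcup_n fst @` PG_gap_witness n.
Proof.
apply/seteqP; split=> [[x y] /= [xPy /existsNP[w /not_implyP[wPx wNPy]]]|].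
  have gap_gt0 : 0 < Sobj x y - Sobj w y.
    by rewrite subr_gt0 -(PG_gapP xPy wPx.1).
  near \oo => n; exists n => //; exists ((x, y), w) => //.
  split.
    by split; first split => /=; apply: ltW; near: n; exact: nbhs_infty_gtr.
  split => //=; rewrite addrC -lerBrDr; apply: ltW; near: n.
  exact: (near_infty_natSinv_lt (PosNum gap_gt0)).
move=> _ [n _ [[[x y] w] [_ [xPy wPx gap]] <-]] /=; split => // sub.
apply: (PG_gapP xPy wPx.1).2 _ (sub _ wPx).
by apply: lt_le_trans gap; rewrite ltrDl invr_gt0.
Unshelve. all: by end_near.
Qed.

Lemma F_sigma_PG_not_sub :
  F_sigma [set p : 'rV[R]_d * 'rV[R]_d |
             PG S G p.2 p.1 /\ ~ (PG S G p.1 `<=` PG S G p.2)].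
Proof.
rewrite PG_not_sub_witnessE; apply: F_sigma_bigcup_image_compact.
- exact: norm_hausdorff.
- by move=> t; exact: cvg_fst.
- exact: compact_PG_gap_witness.
Qed.

End witness.

End projection.

Lemma fixed_sub_setE (U : Type) (P : U -> set U) :
  [set p : U * U | P p.1 p.1 /\ P p.1 `<=` P p.2] =
  ([set p | P p.1 p.1] `&` [set p | P p.2 p.1])
    `\` [set p | P p.2 p.1 /\ ~ (P p.1 `<=` P p.2)].
Proof.
apply/seteqP; split=> -[x y] /=.
  by move=> [xPx sub]; split; [split=> //; exact: sub | case=> _].
by move=> [[xPx xPy] nB]; split=> //; apply: contrapT => nsub; exact: nB.
Qed.

Theorem lemma1 (R : realType) (d m : nat) (S : 'M[R]_d) (G : set 'rV[R]_d) :
  in_Sdm m S -> maximal_S_monotone S G ->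
  [/\ closed [set p : 'rV[R]_d * 'rV[R]_d | PG S G p.1 p.2],
      closed [set p : 'rV[R]_d * 'rV[R]_d | PG S G p.2 p.1],
      F_sigma [set p : 'rV[R]_d * 'rV[R]_d |
                 PG S G p.2 p.1 /\ ~ (PG S G p.1 `<=` PG S G p.2)]
    & Borel [set p : 'rV[R]_d * 'rV[R]_d |
                 PG S G p.1 p.1 /\ PG S G p.1 `<=` PG S G p.2]].
Proof.
move=> _ /maximal_S_monotone_closed closedG.
have cfst : continuous (@fst 'rV[R]_d 'rV[R]_d) by move=> p; exact: cvg_fst.
have csnd : continuous (@snd 'rV[R]_d 'rV[R]_d) by move=> p; exact: cvg_snd.
have closed_PG_pair a b := @closed_PG R d S G _ a b closedG.
split; [exact: closed_PG_pair | exact: closed_PG_pair |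
        exact: F_sigma_PG_not_sub |].
rewrite fixed_sub_setE; apply: BorelD.
  by apply: Borel_closed; apply: closedI; exact: closed_PG_pair.
by apply: Borel_F_sigma; exact: F_sigma_PG_not_sub.
Qed.
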